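(* Let $g$ be any connected undirected graph (system) with diameter $diam(g)$. Every protocol $\pi$ in the state model that is self-stabilizing for the mutual exclusion specification $spec_{EM}$ on $g$ satisfies $temps\_stab(\pi,ds)\ge \lceil diam(g)/2\rceil$, where $ds$ is the synchronous daemon.
   Context: Model (state model with shared variables): a distributed system is a connected undirected graph $g=(V,E)$ whose vertices are processors and edges are communication links; $diam(g)$ is its diameter. Each processor has a unique identity. The state of a processor is the value of its variables; a configuration is the tuple of all processor states. A protocol is a set of rules $\langle guard\rangle \to \langle action\rangle$, where the guard is a predicate on the state of the processor and of its neighbours and the action updates the processor's own state. A processor is enabled if one of its guards is true. In a step, a daemon selects a nonempty subset of the enabled processors, and each selected processor atomically executes its action, all selected processors reading the configuration at the beginning of the step. The synchronous daemon $ds$ selects all enabled processors at every step. Self-stabilization and stabilization time: a protocol $\pi$ is self-stabilizing for $spec$ under daemon $d$ if, from any configuration, every execution of $\pi$ under $d$ contains a configuration from which every execution of $\pi$ under $d$ satisfies $spec$. $temps\_stab(\pi,d)$ is the worst case, over all initial configurations and all executions of $\pi$ under $d$, of the number of steps until such a configuration is reached. Mutual exclusion: each processor $v$ has a predicate $privilege_v$ on its state; $v$ is privileged in a configuration $\gamma$ iff $privilege_v$ is true in $\gamma$; if $v$ is privileged in $\gamma$ and is activated during step $(\gamma,\gamma')$, then $v$ executes its critical section during that step. An execution satisfies $spec_{EM}$ if in every configuration at most one processor is privileged (safety) and every processor executes its critical section infinitely often (liveness). *)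

From mathcomp Require Import all_boot.
Set Implicit Arguments. Unset Strict Implicit. Unset Printing Implicit Defensive.

(* The system is a simple graph: V : finType, e : rel V symmetric and
   irreflexive; connectedness is [forall x y, connect e x y]. *)

Definition walk (V : finType) (e : rel V) (x y : V) (n : nat) : bool :=
  [exists p : n.-tuple V, path e x p && (last x p == y)].

(* graph distance: least n such that a walk of length n from x to y exists
   (in a connected graph it is < #|V|, so searching in [0, #|V|) suffices) *)
Definition dist (V : finType) (e : rel V) (x y : V) : nat :=
  find (walk e x y) (iota 0 #|V|).

Definition diam (V : finType) (e : rel V) : nat :=
  \max_(x : V) \max_(y : V) dist e x y.

Definition config (V : Type) (S : Type) := V -> S.

(* A protocol: processor v has rules indexed by 'I_(nrules v), each being
   <guard> -> <action>; the guard is a predicate and the action computes the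
   new local state of v.  privilege v is a predicate on the state of v. *)
Record protocol (V : finType) (S : Type) := Protocol {
  nrules : V -> nat;
  guard : forall v : V, 'I_(nrules v) -> config V S -> bool;
  action : forall v : V, 'I_(nrules v) -> config V S -> S;
  privilege : V -> S -> bool
}.

Definition local_protocol (V : finType) (S : Type) (e : rel V)
    (P : protocol V S) : Prop :=
  forall (v : V) (r : 'I_(nrules P v)) (c c' : config V S),
    (forall u, (u == v) || e v u -> c u = c' u) ->
    @guard V S P v r c = @guard V S P v r c' /\ @action V S P v r c = @action V S P v r c'.

Definition enabled (V : finType) (S : Type) (P : protocol V S) (v : V)
    (c : config V S) : bool := [exists r : 'I_(nrules P v), @guard V S P v r c].

Definition enabled_set (V : finType) (S : Type) (P : protocol V S)
    (c : config V S) : {set V} := [set v | enabled P v c].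

(* A daemon says which subsets of the enabled set may be selected. *)
Definition daemon (V : finType) := {set V} -> {set V} -> Prop.

Definition ds {V : finType} : daemon V := fun E A => A = E.

(* If no processor is enabled, the execution is over; we represent this
   (terminal) situation by a stuttering step with no activated processor. *)
Definition step (V : finType) (S : Type) (P : protocol V S) (d : daemon V)
    (c : config V S) (A : {set V}) (c' : config V S) : Prop :=
  if enabled_set P c == set0 then A = set0 /\ c' = c
  else [/\ A != set0, A \subset enabled_set P c, d (enabled_set P c) A &
        forall v, if v \in A then exists2 r : 'I_(nrules P v), @guard V S P v r c
                                  & c' v = @action V S P v r c
                  else c' v = c v].

Definition execution (V : finType) (S : Type) (P : protocol V S)
    (d : daemon V) (gam : nat -> config V S) (A : nat -> {set V}) : Prop :=
  forall i, step P d (gam i) (A i) (gam i.+1).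

(* spec_EM: safety (at most one privileged processor in every configuration)
   and liveness (every processor executes its critical section, i.e. is
   privileged in gam i and activated during step i, infinitely often). *)
Definition spec_EM (V : finType) (S : Type) (P : protocol V S)
    (gam : nat -> config V S) (A : nat -> {set V}) : Prop :=
  (forall i, #|[set v | privilege P v (gam i v)]| <= 1) /\
  (forall (v : V) (n : nat), exists2 i, n <= i &
       privilege P v (gam i v) && (v \in A i)).

Definition legitimate (V : finType) (S : Type) (P : protocol V S)
    (d : daemon V) (c : config V S) : Prop :=
  forall gam A, execution P d gam A -> gam 0 = c -> spec_EM P gam A.

Definition self_stabilizing_EM (V : finType) (S : Type) (P : protocol V S)
    (d : daemon V) : Prop :=
  forall gam A, execution P d gam A -> exists i, legitimate P d (gam i).

(* temps_stab(P,d) >= k: temps_stab is the supremum, over all executions, of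
   the number of steps before the first legitimate configuration; being a
   supremum of naturals it is >= k iff some execution has no legitimate
   configuration among its first k configurations gam 0, ..., gam (k-1). *)
Definition temps_stab_ge (V : finType) (S : Type) (P : protocol V S)
    (d : daemon V) (k : nat) : Prop :=
  exists gam A, execution P d gam A /\
    forall i, i < k -> ~ legitimate P d (gam i).

From mathcomp Require Import all_boot.
From mathcomp Require Import zify.
From Stdlib Require Import FunctionalExtensionality.
Set Implicit Arguments. Unset Strict Implicit. Unset Printing Implicit Defensive.

(* Take u, v at distance D = diam g and m = ceil(D/2) - 1, so that the balls
   of radius m around u and v are disjoint.  Run the protocol synchronously
   from an arbitrary configuration until it is legitimate; by liveness, u and
   v are privileged at some later times Tu, Tv >= m.  Since a processor only
   reads its neighbours, what happens inside a ball of radius m - j during j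
   synchronous rounds depends only on the initial contents of the ball of
   radius m.  Hence we can build a synchronous execution whose ball around u
   replays the legitimate run from time Tu - m and whose ball around v
   replays it from time Tv - m: at round m, both u and v are privileged.  By
   safety, none of the configurations at rounds 0..m can be legitimate. *)

Section Walks.
Variables (V : finType) (e : rel V).

Lemma walk0 x : walk e x x 0.
Proof. by apply/existsP; exists (@Tuple 0 V [::] isT) => /=. Qed.

Lemma walk_cat x y z a b : walk e x y a -> walk e y z b -> walk e x z (a + b).
Proof.
move=> /existsP[p /andP[p_path /eqP p_last]] /existsP[q /andP[q_path /eqP q_last]].
apply/existsP; exists (cat_tuple p q) => /=.
by rewrite cat_path p_path p_last q_path last_cat p_last q_last eqxx.
Qed.

Lemma walk_rcons x y z n : walk e x y n -> e y z -> walk e x z n.+1.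
Proof.
move=> /existsP[p /andP[p_path /eqP p_last]] eyz.
apply/existsP; exists (rcons_tuple p z) => /=.
by rewrite rcons_path p_path p_last eyz last_rcons eqxx.
Qed.

Lemma walk_rev x y n : symmetric e -> walk e x y n -> walk e y x n.
Proof.
move=> sym /existsP[p /andP[p_path /eqP p_last]].
apply/existsP; exists (rev_tuple (belast_tuple x p)) => /=.
have e_rev : (fun z t => e t z) =2 e by move=> z t; rewrite sym.
rewrite -p_last rev_path (eq_path e_rev) p_path /=.
have : last x p :: rev (belast x p) = rcons (rev p) x.
  by rewrite -rev_rcons -lastI rev_cons.
by move/(congr1 (last x)) => /= ->; rewrite last_rcons.
Qed.

Lemma dist_le x y n : walk e x y n -> dist e x y <= n.
Proof.
move=> w; rewrite /dist.
have [n_lt|n_ge] := ltnP n #|V|; last first.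
  by apply: leq_trans (find_size _ _) _; rewrite size_iota.
rewrite leqNgt; apply/negP => /(before_find 0).
by rewrite nth_iota // add0n w.
Qed.

Lemma dist_refl x : dist e x x = 0.
Proof. by apply/eqP; rewrite -leqn0 dist_le // walk0. Qed.

Lemma diam_witness : 0 < diam e -> exists u v, u != v /\ dist e u v = diam e.
Proof.
move=> D_gt0.
have V_gt0 : 0 < #|V|.
  by rewrite lt0n; apply: contraTneq D_gt0 => /card0_eq V0; rewrite /diam big_pred0.
have [u u_max] := eq_bigmax (fun x => \max_(y : V) dist e x y) V_gt0.
have [v v_max] := eq_bigmax (fun y => dist e u y) V_gt0.
have duv : dist e u v = diam e by rewrite /diam u_max v_max.
exists u, v; split=> //; apply/eqP => u_eq_v.
by move: D_gt0; rewrite -duv u_eq_v dist_refl.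
Qed.

Definition ball (c : V) (r : nat) (x : V) : bool :=
  [exists n : 'I_r.+1, walk e c x n].

Lemma ball_center c r : ball c r c.
Proof. by apply/existsP; exists ord0; apply: walk0. Qed.

Lemma ball_grow c r x y : ball c r x -> (y == x) || e x y -> ball c r.+1 y.
Proof.
move=> /existsP[n walk_n] /orP[/eqP->|exy]; apply/existsP.
  by exists (widen_ord (leqnSn _) n).
by exists (@Ordinal r.+2 n.+1 (ltn_ord n)); apply: walk_rcons walk_n exy.
Qed.

Lemma ball_le c r s x : r <= s -> ball c r x -> ball c s x.
Proof.
move=> r_le_s /existsP[n walk_n]; apply/existsP.
by exists (widen_ord (r_le_s : r < s.+1) n).
Qed.

Lemma ball_disjoint u v r s x :
  symmetric e -> r + s < dist e u v -> ball u r x -> ball v s x -> False.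
Proof.
move=> sym rs_lt /existsP[n1 walk1] /existsP[n2 /(walk_rev sym) walk2].
have := dist_le (walk_cat walk1 walk2).
by have := ltn_ord n1; have := ltn_ord n2; lia.
Qed.

End Walks.

Section Synchronous.
Variables (V : finType) (S : Type) (P : protocol V S).

Definition sync_step (c c' : config V S) (x : V) : Prop :=
  if enabled P x c then exists2 r : 'I_(nrules P x), guard r c & c' x = action r c
  else c' x = c x.

Lemma step_sync c A c' : step P ds c A c' -> forall x, sync_step c c' x.
Proof.
rewrite /step /sync_step; case: eqP => [no_enabled [_ ->] x|_ [_ _ ->] act x].
  have : x \notin enabled_set P c by rewrite no_enabled inE.
  by rewrite inE => /negbTE ->.
by have := act x; rewrite inE; case: (enabled P x c).
Qed.

Lemma sync_step_step c c' :
  (forall x, sync_step c c' x) -> step P ds c (enabled_set P c) c'.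
Proof.
move=> sync; rewrite /step; case: eqP => [no_enabled|/eqP some_enabled].
  split=> //; apply: functional_extensionality => x.
  have := sync x; rewrite /sync_step.
  have : x \notin enabled_set P c by rewrite no_enabled inE.
  by rewrite inE => /negbTE ->.
split=> // x; move: (sync x); rewrite /sync_step inE.
by case: (enabled P x c).
Qed.

Definition sync_next (c : config V S) : config V S := fun x =>
  if [pick r | @guard V S P x r c] is Some r then action r c else c x.

Lemma sync_step_next c x : sync_step c (sync_next c) x.
Proof.
rewrite /sync_step /sync_next; case: pickP => [r guard_r|no_guard].
  have -> : enabled P x c by apply/existsP; exists r.
  by exists r.
have -> // : enabled P x c = false.
by apply/negbTE/existsPn => r; rewrite no_guard.
Qed.

Definition sync_exec (gam : nat -> config V S) : Prop :=
  forall i x, sync_step (gam i) (gam i.+1) x.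

Lemma sync_exec_execution gam :
  sync_exec gam -> execution P ds gam (fun i => enabled_set P (gam i)).
Proof. by move=> sync i; apply: sync_step_step; apply: sync. Qed.

Lemma execution_sync gam A : execution P ds gam A -> sync_exec gam.
Proof. by move=> exec i; apply: step_sync (exec i). Qed.

Definition run (c : config V S) (n : nat) : config V S := iter n sync_next c.

Lemma sync_exec_run c : sync_exec (run c).
Proof. by move=> i x; apply: sync_step_next. Qed.

Lemma sync_exec_shift gam k : sync_exec gam -> sync_exec (fun t => gam (k + t)).
Proof. by move=> sync t; rewrite addnS; apply: sync. Qed.

Lemma sync_step_local (e : rel V) (c c' d d' : config V S) x :
  local_protocol e P ->
  (forall y, (y == x) || e x y -> c y = d y) ->
  sync_step d d' x -> c' x = d' x -> sync_step c c' x.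
Proof.
move=> loc agree sync_d same_x.
have loc_x r := loc x r c d agree.
have en_eq : enabled P x c = enabled P x d.
  by apply/existsP/existsP => -[r guard_r]; exists r; rewrite ?(loc_x r).1 // -(loc_x r).1.
move: sync_d; rewrite /sync_step en_eq; case: (enabled P x d).
  by move=> [r guard_r act_r]; exists r; rewrite ?(loc_x r).1 // same_x act_r (loc_x r).2.
by move=> d_keeps; rewrite same_x d_keeps agree // eqxx.
Qed.

End Synchronous.

Lemma legitimate_suffix (V : finType) (S : Type) (P : protocol V S) (d : daemon V)
    gam A k :
  execution P d gam A -> legitimate P d (gam k) ->
  spec_EM P (fun t => gam (k + t)) (fun t => A (k + t)).
Proof.
move=> exec legit; apply: legit; last by rewrite addn0.
by move=> t; rewrite addnS; apply: exec.
Qed.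

Lemma two_privileged (V : finType) (S : Type) (P : protocol V S) (c : config V S) u v :
  u != v -> privilege P u (c u) -> privilege P v (c v) ->
  1 < #|[set w | privilege P w (c w)]|.
Proof.
move=> uv priv_u priv_v; apply: (@leq_trans #|[set u; v]|); first by rewrite cards2 uv.
by apply/subset_leq_card/subsetP => w; rewrite !inE => /orP[]/eqP->.
Qed.

Section Splice.
Variables (V : finType) (e : rel V) (S : Type) (P : protocol V S).
Hypothesis loc : local_protocol e P.
Variables (u v : V) (m : nat).
Hypothesis balls_disjoint : forall x, ball e u m x -> ball e v m x -> False.
(* beta_u is replayed around u, beta_v around v, starting from c0 elsewhere. *)
Variables (beta_u beta_v : nat -> config V S) (c0 : config V S).
Hypotheses (sync_u : sync_exec P beta_u) (sync_v : sync_exec P beta_v).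

Definition patch (r j : nat) (c : config V S) : config V S := fun x =>
  if ball e u r x then beta_u j x else if ball e v r x then beta_v j x else c x.

Fixpoint spliced (j : nat) : config V S :=
  if j is j'.+1 then
    if j' < m then patch (m - j) j (sync_next P (spliced j'))
    else sync_next P (spliced j')
  else patch m 0 c0.

Lemma patch_u r j c x : ball e u r x -> patch r j c x = beta_u j x.
Proof. by rewrite /patch => ->. Qed.

Lemma patch_v r j c x : r <= m -> ball e v r x -> patch r j c x = beta_v j x.
Proof.
move=> r_le_m ball_v; rewrite /patch ball_v; case: ifP => // ball_u.
by case: (balls_disjoint (ball_le r_le_m ball_u) (ball_le r_le_m ball_v)).
Qed.

Lemma spliced_agree j x : j <= m ->
  (ball e u (m - j) x -> spliced j x = beta_u j x) /\
  (ball e v (m - j) x -> spliced j x = beta_v j x).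
Proof.
case: j => [_|j j_lt_m] /=; rewrite ?subn0 ?j_lt_m.
  by split; [apply: patch_u | apply: patch_v].
by split; [apply: patch_u | apply: patch_v; rewrite leq_subr].
Qed.

(* Each round is a synchronous step: inside the shrinking balls by locality,
   since the neighbourhood of the (m - j - 1)-ball lies in the (m - j)-ball
   where the invariant holds; outside them by construction. *)
Lemma spliced_step j x : sync_step P (spliced j) (spliced j.+1) x.
Proof.
rewrite [spliced j.+1]/=; have [j_lt_m|_] := ltnP j m; last exact: sync_step_next.
have grow c y : ball e c (m - j.+1) x -> (y == x) || e x y -> ball e c (m - j) y.
  by move=> ball_x xy; rewrite -subnSK //; apply: ball_grow ball_x xy.
have [ball_u|not_u] := boolP (ball e u (m - j.+1) x).
  apply: (sync_step_local loc _ (sync_u j x)); last exact: patch_u.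
  by move=> y xy; apply: (proj1 (spliced_agree y (ltnW j_lt_m))); apply: grow.
have [ball_v|not_v] := boolP (ball e v (m - j.+1) x).
  apply: (sync_step_local loc _ (sync_v j x)); last exact: patch_v (leq_subr _ _) ball_v.
  by move=> y xy; apply: (proj2 (spliced_agree y (ltnW j_lt_m))); apply: grow.
have := sync_step_next P (spliced j) x.
by rewrite /sync_step /= /patch (negbTE not_u) (negbTE not_v).
Qed.

Lemma splice :
  exists gam, [/\ sync_exec P gam, gam m u = beta_u m u & gam m v = beta_v m v].
Proof.
exists spliced; split; first by move=> j x; apply: spliced_step.
  by apply: (proj1 (spliced_agree u (leqnn m))); rewrite subnn ball_center.
by apply: (proj2 (spliced_agree v (leqnn m))); rewrite subnn ball_center.
Qed.

End Splice.

Lemma double_pred_uphalf_lt n : 0 < n -> (uphalf n).-1 + (uphalf n).-1 < n.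
Proof. by rewrite uphalf_half; have := odd_double_half n; rewrite -addnn; lia. Qed.

Theorem theorem3 (V : finType) (e : rel V) (S : Type) (P : protocol V S) :
  symmetric e -> irreflexive e -> (forall x y : V, connect e x y) ->
  inhabited S ->
  local_protocol e P ->
  self_stabilizing_EM P ds ->
  temps_stab_ge P ds (uphalf (diam e)).
Proof.
move=> sym _ _ [s0] loc self_stab.
pose init : config V S := fun _ => s0.
pose rho := run P init.
have rho_exec := sync_exec_execution (sync_exec_run P init).
have [D0|D_gt0] := posnP (diam e).
  by exists rho, (fun i => enabled_set P (rho i)); split=> //; rewrite D0.
have [u [v [uv duv]]] := diam_witness D_gt0.
set m := (uphalf (diam e)).-1.
have disjoint x : ball e u m x -> ball e v m x -> False.
  by apply: (ball_disjoint sym); rewrite duv; apply: double_pred_uphalf_lt.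
have [i0 legit] := self_stab _ _ rho_exec.
have [_ live] := legitimate_suffix rho_exec legit.
have [Tu m_le_Tu /andP[priv_u _]] := live u m.
have [Tv m_le_Tv /andP[priv_v _]] := live v m.
have shift k := sync_exec_shift k (sync_exec_run P init).
have [gam [sync_gam gam_u gam_v]] :=
  splice loc disjoint init (shift (i0 + (Tu - m))) (shift (i0 + (Tv - m))).
exists gam, (fun i => enabled_set P (gam i)); split; first exact: sync_exec_execution.
(* A legitimate configuration at round i <= m forbids two privileges at m. *)
move=> i i_lt legit_i.
have [safe _] := legitimate_suffix (sync_exec_execution sync_gam) legit_i.
have i_le_m : i <= m by rewrite /m -ltnS prednK // uphalf_gt0.
have := safe (m - i); rewrite subnKC // leqNgt (two_privileged uv) //.
  by rewrite gam_u -addnA subnK.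
by rewrite gam_v -addnA subnK.
Qed.
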